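(* Let $K$ be a simplicial complex and let $\overrightarrow{W}$ be a Morse sequence on $K$. Then there exists exactly one reference map for $\overrightarrow{W}$ and exactly one coreference map for $\overrightarrow{W}$.
   Context: A simplicial complex $K$ is a finite collection of non-empty finite sets such that every non-empty subset of a member of $K$ is also in $K$; its members are called simplices (or faces), $\dim\sigma=|\sigma|-1$, $K^{(p)}$ denotes the set of $p$-dimensional simplices, and a facet is a simplex maximal for inclusion. A pair $(\sigma,\tau)$ of simplices of $K$ with $\sigma\subsetneq\tau$ is a free pair for $K$ if $\tau$ is the only simplex of $K$ other than $\sigma$ that contains $\sigma$ (so $\tau$ is a facet and $\dim\tau=\dim\sigma+1$); then $K$ is an elementary expansion of $K\setminus\{\sigma,\tau\}$. If $\nu$ is a facet of $K$, then $K$ is an elementary filling of $K\setminus\{\nu\}$. A Morse sequence on $K$ is a sequence $\overrightarrow{W}=\langle \emptyset=K_0,K_1,\dots,K_k=K\rangle$ of simplicial complexes such that each $K_i$ is an elementary expansion or an elementary filling of $K_{i-1}$. If $K_i=K_{i-1}\cup\{\nu\}$ is a filling, $\nu$ is called critical; if $K_i=K_{i-1}\cup\{\sigma,\tau\}$ is an expansion with $\sigma\subset\tau$, then $(\sigma,\tau)$ is a regular pair, $\sigma$ is lower regular and $\tau$ is upper regular. Let $\widehat{W}$ be the set of critical simplices. Chains mod 2: $K[p]$ is the set of all subsets of $K^{(p)}$, a vector space over $\mathbb{Z}_2$ with symmetric difference as addition, the empty chain written $0$; $\widehat{W}[p]=\{c\in K[p]: c\subseteq \widehat W\}$. For $\sigma\in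 K^{(p)}$, $\partial(\sigma)=\{\tau\in K^{(p-1)}:\tau\subset\sigma\}$ and $\delta(\sigma)=\{\tau\in K^{(p+1)}:\sigma\subset\tau\}$. A frame on $\overrightarrow{W}$ is a map $\Upsilon$ assigning to each $\nu\in K^{(p)}$ an element $\Upsilon(\nu)\in\widehat W[p]$; it is extended linearly to chains by $\Upsilon(c)=\sum_{\nu\in c}\Upsilon(\nu)$ (sum mod 2). A frame $\curlywedge$ is a reference map for $\overrightarrow{W}$ if $\curlywedge(\nu)=\{\nu\}$ for every critical $\nu$ and, for every upper regular $\tau$, $\curlywedge(\tau)=0$ and $\curlywedge(\partial(\tau))=0$. A frame $\curlyvee$ is a coreference map for $\overrightarrow{W}$ if $\curlyvee(\nu)=\{\nu\}$ for every critical $\nu$ and, for every lower regular $\sigma$, $\curlyvee(\sigma)=0$ and $\curlyvee(\delta(\sigma))=0$. *)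

From mathcomp Require Import all_boot.
Set Implicit Arguments. Unset Strict Implicit. Unset Printing Implicit Defensive.

Section Morse.
Variable V : finType.

Notation simplex := {set V}.
Notation cplx := {set {set V}}.

Definition is_complex (K : cplx) : Prop :=
  (forall s : simplex, s \in K -> s != set0) /\
  (forall s t : simplex, t \in K -> s \subset t -> s != set0 -> s \in K).

(* Fill nu  = inl nu      : elementary filling by the facet nu
   Exp s t  = inr (s, t)  : elementary expansion by the free pair (s, t) *)
Definition step : Type := (simplex + (simplex * simplex))%type.
Definition Fill (nu : simplex) : step := inl nu.
Definition Exp (s t : simplex) : step := inr (s, t).

Definition step_add (L : cplx) (st : step) : cplx :=
  match st with
  | inl nu => nu |: L
  | inr (s, t) => s |: (t |: L)
  end.

Definition elem_step (L : cplx) (st : step) : Prop :=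
  match st with
  | inl nu =>
      is_complex (nu |: L) /\ nu \notin L /\
      (forall x, x \in nu |: L -> nu \subset x -> x = nu)
  | inr (s, t) =>
      is_complex (s |: (t |: L)) /\ s \notin L /\ t \notin L /\
      s \proper t /\
      (forall x, x \in s |: (t |: L) -> s \subset x -> x = s \/ x = t)
  end.

Fixpoint morse_from (L : cplx) (w : seq step) : Prop :=
  match w with
  | [::] => True
  | st :: w' => elem_step L st /\ morse_from (step_add L st) w'
  end.

Definition morse_sequence (K : cplx) (w : seq step) : Prop :=
  morse_from set0 w /\ foldl step_add set0 w = K.

Definition critical (w : seq step) (nu : simplex) : Prop := Fill nu \in w.
Definition critical_set (w : seq step) : cplx := [set nu | Fill nu \in w].
Definition lower_regular (w : seq step) (s : simplex) : Prop :=
  exists t, Exp s t \in w.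
Definition upper_regular (w : seq step) (t : simplex) : Prop :=
  exists s, Exp s t \in w.

(* Chains mod 2 are sets of simplices; addition is symmetric difference. *)
Definition symdiff (A B : cplx) : cplx := (A :\: B) :|: (B :\: A).

Definition bdry (K : cplx) (s : simplex) : cplx :=
  [set x in K | (x \subset s) && (#|x| == #|s| - 1)].
Definition cobdry (K : cplx) (s : simplex) : cplx :=
  [set x in K | (s \subset x) && (#|x| == #|s| + 1)].

Definition frame_ext (U : simplex -> cplx) (c : cplx) : cplx :=
  \big[symdiff/set0]_(nu in c) U nu.

Definition is_frame (K : cplx) (w : seq step) (U : simplex -> cplx) : Prop :=
  forall nu, nu \in K ->
    U nu \subset [set c in critical_set w | #|c| == #|nu|].

Definition is_reference_map (K : cplx) (w : seq step) (U : simplex -> cplx) : Prop :=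
  is_frame K w U /\
  (forall nu, nu \in K -> critical w nu -> U nu = [set nu]) /\
  (forall t, t \in K -> upper_regular w t ->
     U t = set0 /\ frame_ext U (bdry K t) = set0).

Definition is_coreference_map (K : cplx) (w : seq step) (U : simplex -> cplx) : Prop :=
  is_frame K w U /\
  (forall nu, nu \in K -> critical w nu -> U nu = [set nu]) /\
  (forall s, s \in K -> lower_regular w s ->
     U s = set0 /\ frame_ext U (cobdry K s) = set0).

End Morse.

(* Order the simplices of K by the step of the Morse sequence that adds them.
   The defining conditions of a (co)reference map then form a triangular system:
   a critical simplex goes to itself, one simplex of each regular pair (s, t)
   goes to 0, and the vanishing of the frame on the (co)boundary of that
   simplex forces the image of its partner.  For a reference map, s is forced
   by the image of the boundary of t minus s, which consists of earlier
   simplices; for a coreference map, t is forced by the image of the coboundary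
   of s minus t, which consists of later simplices.  A triangular system has
   exactly one solution, and this solution is a frame because every simplex
   involved in forcing has the dimension of the forced one. *)
From HB Require Import structures.
From mathcomp Require Import all_boot.
Set Implicit Arguments. Unset Strict Implicit. Unset Printing Implicit Defensive.

Section Chains.
Variable V : finType.
Implicit Types A B c : {set {set V}}.

Lemma symdiffA : associative (@symdiff V).
Proof.
move=> A B C; apply/setP=> x; rewrite /symdiff !inE.
by case: (x \in A); case: (x \in B); case: (x \in C).
Qed.

Lemma symdiffC : commutative (@symdiff V).
Proof.
by move=> A B; apply/setP=> x; rewrite /symdiff !inE; case: (x \in A); case: (x \in B).
Qed.

Lemma set0_symdiff : left_id set0 (@symdiff V).
Proof. by move=> A; apply/setP=> x; rewrite /symdiff !inE; case: (x \in A). Qed.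

HB.instance Definition _ :=
  Monoid.isComLaw.Build {set {set V}} set0 (@symdiff V) symdiffA symdiffC set0_symdiff.

Lemma symdiff_eq0 A B : symdiff A B = set0 <-> A = B.
Proof.
split=> [/setP eqAB | ->]; apply/setP=> x; last by rewrite /symdiff !inE; case: (x \in B).
by move: (eqAB x); rewrite /symdiff !inE; case: (x \in A); case: (x \in B).
Qed.

Lemma eq_frame_ext (U1 U2 : {set V} -> {set {set V}}) c :
  {in c, U1 =1 U2} -> frame_ext U1 c = frame_ext U2 c.
Proof. exact: eq_bigr. Qed.

Lemma frame_ext_sub (U : {set V} -> {set {set V}}) c A :
  {in c, forall x, U x \subset A} -> frame_ext U c \subset A.
Proof.
move=> UA; rewrite /frame_ext; elim/big_rec: _ => [|x X /UA UxA XA]; first exact: sub0set.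
by apply/subsetP=> y; rewrite /symdiff !inE => /orP[]/andP[_ y_in];
  [apply: (subsetP UxA) | apply: (subsetP XA)].
Qed.

Lemma frame_ext_eq0D1 (U : {set V} -> {set {set V}}) c x : x \in c ->
  frame_ext U c = set0 <-> U x = frame_ext U (c :\ x).
Proof. by move=> xc; rewrite /frame_ext (big_setD1 _ xc); apply: symdiff_eq0. Qed.

End Chains.

Section RankedFixpoint.
Variables (T : finType) (R : Type) (D : {set T}) (rk : T -> nat).

Lemma rank_ind (P : T -> Prop) :
  (forall x, x \in D -> (forall y, y \in D -> rk y < rk x -> P y) -> P x) ->
  {in D, forall x, P x}.
Proof.
move=> IH x; have [n] := ubnP (rk x); elim: n x => // n IHn x ltxn xD.
by apply: (IH _ xD) => y yD ltyx; apply: IHn yD; rewrite (leq_trans ltyx) // -ltnS.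
Qed.

Variable F : (T -> R) -> T -> R.
Hypothesis F_local : forall U1 U2 x,
  (forall y, y \in D -> rk y < rk x -> U1 y = U2 y) -> F U1 x = F U2 x.

Definition fixpoint_in (U : T -> R) := {in D, forall x, U x = F U x}.

Lemma fixpoint_in_unique U1 U2 : fixpoint_in U1 -> fixpoint_in U2 -> {in D, U1 =1 U2}.
Proof.
by move=> fix1 fix2; apply: rank_ind => x xD IH; rewrite fix1 // fix2 //; apply: F_local.
Qed.

Lemma iter_stable u0 n : {in D, forall x, rk x < n ->
  forall k, iter (k + n) F u0 x = iter n F u0 x}.
Proof.
elim: n => // n IHn x xD ltxn k; rewrite addnS /=.
by apply: F_local => y yD ltyx; apply: IHn; rewrite // (leq_trans ltyx) // -ltnS.
Qed.

Lemma fixpoint_in_exists (u0 : T -> R) : exists U, fixpoint_in U.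
Proof.
pose n := \max_(x in D) (rk x).+1; exists (iter n F u0) => x xD.
rewrite -[LHS](iter_stable u0 xD _ 1) //.
exact: (leq_bigmax_cond (F := fun y => (rk y).+1)).
Qed.

End RankedFixpoint.

Section MatchedFrames.
Variables (V : finType) (K : {set {set V}}) (w : seq (step V)).
Variables (N : {set V} -> {set {set V}}) (mate : rel {set V}) (rk : {set V} -> nat).

Definition matched_map (U : {set V} -> {set {set V}}) : Prop :=
  is_frame K w U /\
  (forall nu, nu \in K -> critical w nu -> U nu = [set nu]) /\
  (forall z, z \in K -> (exists d, mate z d) -> U z = set0 /\ frame_ext U (N z) = set0).

(* [mate z d] encodes a regular pair whose member z is sent to 0 and whose
   other member d is forced by the vanishing of the frame on the chain [N z]. *)
Hypothesis mate_cover :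
  {in K, forall x, [\/ Fill x \in w, exists d, mate x d | exists z, mate z x]}.
Hypothesis mate_uncritical : forall z d, mate z d -> Fill z \notin w /\ Fill d \notin w.
Hypothesis mate_no_chain : forall x d z, mate x d -> ~~ mate z x.
Hypothesis mate_inj : forall z1 z2 d, mate z1 d -> mate z2 d -> z1 = z2.
Hypothesis mate_mem : forall z d, mate z d -> z \in K /\ d \in N z.
Hypothesis mate_rank : forall z d y, mate z d -> y \in N z ->
  [/\ y \in K, #|y| = #|d| & y != d -> rk y < rk d].

Definition matched_rec (U : {set V} -> {set {set V}}) x :=
  if Fill x \in w then [set x]
  else if [pick z | mate z x] is Some z then frame_ext U (N z :\ x) else set0.

Lemma matched_rec_local U1 U2 x :
  (forall y, y \in K -> rk y < rk x -> U1 y = U2 y) ->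
  matched_rec U1 x = matched_rec U2 x.
Proof.
move=> eqU; rewrite /matched_rec; case: ifP => // _; case: pickP => // z zx.
apply: eq_frame_ext => y /setD1P[yx yN]; have [yK _ ltyx] := mate_rank zx yN.
exact: eqU yK (ltyx yx).
Qed.

Lemma matched_rec_forced U z d : mate z d -> matched_rec U d = frame_ext U (N z :\ d).
Proof.
move=> zd; have [_ /negbTE dw] := mate_uncritical zd; rewrite /matched_rec dw.
by case: pickP => [z' z'd | /(_ z)]; [rewrite (mate_inj z'd zd) | rewrite zd].
Qed.

Lemma matched_rec_zeroed U z d : mate z d -> matched_rec U z = set0.
Proof.
move=> zd; have [/negbTE zw _] := mate_uncritical zd; rewrite /matched_rec zw.
by case: pickP => // z' z'z; move: (mate_no_chain z' zd); rewrite z'z.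
Qed.

Lemma matched_map_fixpoint U : matched_map U -> fixpoint_in K matched_rec U.
Proof.
move=> [_ [Ucrit Uzero]] x xK.
case: (mate_cover xK) => [xw | [d xd] | [z zx]].
- by rewrite /matched_rec xw Ucrit.
- by rewrite (matched_rec_zeroed _ xd); case: (Uzero _ xK (ex_intro _ d xd)).
- have [zK xN] := mate_mem zx; rewrite (matched_rec_forced _ zx).
  by apply/(frame_ext_eq0D1 _ xN); case: (Uzero _ zK (ex_intro _ x zx)).
Qed.

Lemma fixpoint_matched_map U : fixpoint_in K matched_rec U -> matched_map U.
Proof.
move=> fixU; split; [|split].
- apply: (rank_ind (rk := rk)) => x xK IH; rewrite fixU // /matched_rec.
  case: ifP => [xw | _]; first by rewrite sub1set !inE xw eqxx.
  case: pickP => [z zx | _]; last exact: sub0set.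
  apply: frame_ext_sub => y /setD1P[yx yN]; have [yK <- ltyx] := mate_rank zx yN.
  exact: IH yK (ltyx yx).
- by move=> nu nuK nuw; rewrite fixU // /matched_rec nuw.
- move=> z zK [d zd]; rewrite fixU // (matched_rec_zeroed _ zd); split=> //.
  have [_ dN] := mate_mem zd; have [dK _ _] := mate_rank zd dN.
  by apply/(frame_ext_eq0D1 _ dN); rewrite fixU // (matched_rec_forced _ zd).
Qed.

Lemma matched_map_exists_unique :
  exists U, matched_map U /\ (forall U', matched_map U' -> {in K, U' =1 U}).
Proof.
have [U fixU] := fixpoint_in_exists matched_rec_local (fun _ => set0).
exists U; split; first exact: fixpoint_matched_map.
move=> U' /matched_map_fixpoint fixU'.
by apply: (fixpoint_in_unique matched_rec_local fixU').
Qed.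

End MatchedFrames.

Section Steps.
Variable V : finType.
Implicit Types (L : {set {set V}}) (st : step V) (x s t : {set V}).

Definition cells st : seq {set V} :=
  match st with inl nu => [:: nu] | inr (s, t) => [:: s; t] end.

Lemma mem_step_add L st x : (x \in step_add L st) = (x \in cells st) || (x \in L).
Proof. by case: st => [nu | [s t]]; rewrite /= !inE ?orbA. Qed.

Lemma mem_foldl_step_add L r x :
  (x \in foldl (@step_add V) L r) = has (fun st => x \in cells st) r || (x \in L).
Proof.
elim: r L => [|st r IH] L //=.
by rewrite IH mem_step_add orbA [has _ _ || _]orbC.
Qed.

Lemma elem_step_new L st x : elem_step L st -> x \in cells st -> x \notin L.
Proof.
case: st => [nu | [s t]] /=; first by move=> [_ [nuL _]]; rewrite inE => /eqP ->.
by move=> [_ [sL [tL _]]]; rewrite !inE => /orP[] /eqP ->.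
Qed.

Lemma elem_step_Exp L s t : elem_step L (Exp s t) -> s \proper t /\ #|t| = #|s|.+1.
Proof.
move=> [[_ Lclosed] [_ [_ [ltst free]]]]; split=> //.
have [sst [y yt ys]] := properP ltst.
have ys_sub : y |: s \subset t by rewrite subUset sub1set yt sst.
have ys_in : y |: s \in s |: (t |: L).
  apply: Lclosed ys_sub _; first by rewrite !inE eqxx orbT.
  by apply/set0Pn; exists y; rewrite !inE eqxx.
case: (free _ ys_in (subsetUr _ _)) => [/setP/(_ y) | <-].
  by rewrite !inE eqxx (negbTE ys).
by rewrite cardsU1 ys.
Qed.

Lemma morse_from_nth L r i : morse_from L r -> i < size r ->
  elem_step (foldl (@step_add V) L (take i r)) (nth (Fill set0) r i).
Proof.
elim: r L i => [|st r IH] L i // [Lst Lr].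
by case: i => [|i] // lt_ir; apply: IH.
Qed.

End Steps.

Section MorseSequence.
Variables (V : finType) (K : {set {set V}}) (w : seq (step V)).
Hypotheses (Kcomplex : is_complex K) (Kw : morse_sequence K w).

Definition morse_prefix i := foldl (@step_add V) set0 (take i w).

Definition pos (x : {set V}) := find (fun st => x \in cells st) w.

Lemma mem_morse_prefix i x : i <= size w -> (x \in morse_prefix i) = (pos x < i).
Proof. by move=> le_iw; rewrite mem_foldl_step_add inE orbF has_take_leq. Qed.

Lemma mem_morse_cells st x : st \in w -> x \in cells st -> x \in K.
Proof.
move=> stw xst; case: Kw => _ <-; rewrite mem_foldl_step_add.
by apply/orP; left; apply/hasP; exists st.
Qed.

Lemma morse_cell_cases x : x \in K ->
  [\/ Fill x \in w, exists t, Exp x t \in w | exists s, Exp s x \in w].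
Proof.
case: Kw => _ <-; rewrite mem_foldl_step_add inE orbF => /hasP[[nu | [s t]] stw /=].
  by rewrite inE => /eqP ->; constructor 1.
by rewrite !inE => /orP[] /eqP ->; [constructor 2; exists t | constructor 3; exists s].
Qed.

Lemma elem_step_index st : st \in w -> elem_step (morse_prefix (index st w)) st.
Proof.
move=> stw; rewrite -{2}(nth_index (Fill set0) stw).
by apply: morse_from_nth Kw.1 _; rewrite index_mem.
Qed.

Lemma morse_prefix_index st : st \in w ->
  morse_prefix (index st w).+1 = step_add (morse_prefix (index st w)) st.
Proof.
move=> stw; rewrite /morse_prefix (take_nth (Fill set0)) ?index_mem //.
by rewrite foldl_rcons nth_index.
Qed.

Lemma pos_cells st x : st \in w -> x \in cells st -> pos x = index st w.
Proof.
move=> stw xst; have lt_iw : index st w < size w by rewrite index_mem.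
have in_next : x \in morse_prefix (index st w).+1.
  by rewrite morse_prefix_index // mem_step_add xst.
have notin_prev : x \notin morse_prefix (index st w).
  exact: elem_step_new (elem_step_index stw) xst.
rewrite mem_morse_prefix // in in_next.
rewrite (mem_morse_prefix _ (ltnW lt_iw)) -leqNgt in notin_prev.
by apply/eqP; rewrite eqn_leq -ltnS in_next.
Qed.

Lemma step_of_cell st1 st2 x : st1 \in w -> st2 \in w ->
  x \in cells st1 -> x \in cells st2 -> st1 = st2.
Proof.
move=> st1w st2w x1 x2.
by rewrite -(nth_index (Fill set0) st1w) -(pos_cells st1w x1) (pos_cells st2w x2) nth_index.
Qed.

Lemma Exp_uncritical s t : Exp s t \in w -> Fill s \notin w /\ Fill t \notin w.
Proof.
move=> stw; split; apply/negP => fw.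
  by have := step_of_cell fw stw (mem_head _ _) (mem_head _ _).
by have := step_of_cell fw stw (mem_head _ _) (mem_last s [:: t]).
Qed.

Lemma Exp_no_chain s x t : Exp s x \in w -> Exp x t \notin w.
Proof.
move=> sxw; apply/negP => xtw.
case: (step_of_cell sxw xtw (mem_last s [:: x]) (mem_head _ _)) => sx _.
by rewrite sx in sxw; have [] := elem_step_Exp (elem_step_index sxw); rewrite properxx.
Qed.

Lemma Exp_bdry s t : Exp s t \in w -> t \in K /\ s \in bdry K t.
Proof.
move=> stw; have [/properP[sst _] ct] := elem_step_Exp (elem_step_index stw).
split; first exact: mem_morse_cells stw (mem_last s [:: t]).
by rewrite inE (mem_morse_cells stw (mem_head _ _)) sst ct subn1 /=.
Qed.

Lemma bdry_pos s t y : Exp s t \in w -> y \in bdry K t ->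
  [/\ y \in K, #|y| = #|s| & y != s -> pos y < pos s].
Proof.
move=> stw; rewrite inE => /andP[yK /andP[yt /eqP cy]].
have step_st := elem_step_index stw; have [_ ct] := elem_step_Exp step_st.
rewrite ct subn1 /= in cy; split=> // ys.
have [[_ closed] _] := step_st.
have : y \in step_add (morse_prefix (index (Exp s t) w)) (Exp s t).
  by apply: closed yt (Kcomplex.1 _ yK); rewrite !inE eqxx orbT.
rewrite mem_step_add !inE (negbTE ys) /= => /orP[/eqP yt_eq | y_prev].
  by move: cy; rewrite yt_eq ct => /eqP; rewrite eq_sym (ltn_eqF (ltnSn _)).
have le_iw : index (Exp s t) w <= size w by apply/ltnW; rewrite index_mem.
rewrite mem_morse_prefix // in y_prev.
by rewrite (pos_cells stw (mem_head _ _)).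
Qed.

Lemma Exp_cobdry s t : Exp s t \in w -> s \in K /\ t \in cobdry K s.
Proof.
move=> stw; have [/properP[sst _] ct] := elem_step_Exp (elem_step_index stw).
split; first exact: mem_morse_cells stw (mem_head _ _).
by rewrite inE (mem_morse_cells stw (mem_last s [:: t])) sst ct addn1 /=.
Qed.

Lemma cobdry_pos s t y : Exp s t \in w -> y \in cobdry K s ->
  [/\ y \in K, #|y| = #|t| & y != t -> size w - pos y < size w - pos t].
Proof.
move=> stw; rewrite inE => /andP[yK /andP[sy /eqP cy]].
have step_st := elem_step_index stw; have [_ ct] := elem_step_Exp step_st.
rewrite addn1 -ct in cy; split=> // yt.
have lt_iw : index (Exp s t) w < size w by rewrite index_mem.
have y_later : y \notin morse_prefix (index (Exp s t) w).+1.
  rewrite morse_prefix_index //; apply/negP => y_in.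
  have [_ [_ [_ [_ free]]]] := step_st.
  case: (free y y_in sy) => [ys | yt_eq]; last by rewrite yt_eq eqxx in yt.
  by move: cy; rewrite ys ct => /eqP; rewrite (ltn_eqF (ltnSn _)).
rewrite mem_morse_prefix // -leqNgt in y_later.
by rewrite (pos_cells stw (mem_last s [:: t])); apply: ltn_sub2l.
Qed.

Lemma reference_map_exists_unique :
  exists U, is_reference_map K w U /\
    (forall U', is_reference_map K w U' -> {in K, U' =1 U}).
Proof.
apply: (matched_map_exists_unique (N := bdry K) (mate := fun t s => Exp s t \in w)
  (rk := pos)).
- by move=> x /morse_cell_cases[]; [constructor 1 | constructor 3 | constructor 2].
- by move=> t s /Exp_uncritical[].
- by move=> x d z; apply: Exp_no_chain.
- by move=> t1 t2 s st1 st2; case: (step_of_cell st1 st2 (mem_head _ _) (mem_head _ _)).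
- by move=> t s /Exp_bdry.
- by move=> t s y /bdry_pos; apply.
Qed.

Lemma coreference_map_exists_unique :
  exists U, is_coreference_map K w U /\
    (forall U', is_coreference_map K w U' -> {in K, U' =1 U}).
Proof.
apply: (matched_map_exists_unique (N := cobdry K) (mate := fun s t => Exp s t \in w)
  (rk := fun x => size w - pos x)).
- exact: morse_cell_cases.
- exact: Exp_uncritical.
- by move=> x d z xd; apply: contraL xd; apply: Exp_no_chain.
- move=> s1 s2 t st1 st2.
  by case: (step_of_cell st1 st2 (mem_last s1 [:: t]) (mem_last s2 [:: t])).
- exact: Exp_cobdry.
- by move=> s t y /cobdry_pos; apply.
Qed.

End MorseSequence.

Theorem theorem1 (V : finType) (K : {set {set V}}) (w : seq (step V)) :
  is_complex K -> morse_sequence K w ->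
  (exists U : {set V} -> {set {set V}},
      is_reference_map K w U /\
      (forall U', is_reference_map K w U' -> forall nu, nu \in K -> U' nu = U nu)) /\
  (exists U : {set V} -> {set {set V}},
      is_coreference_map K w U /\
      (forall U', is_coreference_map K w U' -> forall nu, nu \in K -> U' nu = U nu)).
Proof.
move=> Kcomplex Kw; split; first exact: reference_map_exists_unique.
exact: coreference_map_exists_unique.
Qed.
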